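(* Let $\Gamma=\mathsf{PSL}_2(\mathbb{Z})=\langle U,S\mid U^3,S^2\rangle$, with $U$ of order $3$ and $S$ of order $2$. For $n,m\ge0$ let $q(n,m)$ be the number of words in $\{U,S\}$ with exactly $n$ letters $U$ and $m$ letters $S$ that equal the identity in $\Gamma$, and let $\hat q(n,m)$ be the number of such words which in addition do not contain two consecutive letters $S$ (i.e. do not contain the factor $SS$). Set $\hat q(n,m)=0$ if an argument is negative. Then for all $n,m\ge 0$, $$q(3n,2m)=\sum_{k\ge0}\hat q(3n,2m-2k)\binom{3n+k}{k}.$$ Consequently, with $Q(x,y)=\sum_{n,m\ge0}q(n,m)x^ny^m$ and $\widehat Q(x,y)=\sum_{n,m\ge0}\hat q(3n,2m)x^{3n}y^{2m}$, $$Q(x,y)=\widehat{Q}\Big(\frac{x}{1-y^2},y\Big)\cdot\frac{1}{1-y^2}.$$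
   Context: Words are finite sequences over the alphabet $\{U,S\}$ read as products in $\Gamma$; the empty word counts as a word equal to the identity. Note $q(n,m)=\hat q(n,m)=0$ unless $3\mid n$ and $2\mid m$. *)

From HB Require Import structures.
From mathcomp Require Import all_boot all_order all_algebra.
Set Implicit Arguments. Unset Strict Implicit. Unset Printing Implicit Defensive.
Import Order.TTheory GRing.Theory Num.Theory.
Local Open Scope ring_scope.

(* Letters: [true] stands for U, [false] stands for S.
   A word is a sequence of letters, read as a product (left to right). *)
Definition letterU : bool := true.
Definition letterS : bool := false.

(* Gamma = PSL_2(Z), realised as SL_2(Z) modulo {I, -I}.
   S = [[0,-1],[1,0]] (order 2 in PSL_2(Z)),
   U = [[0,-1],[1,1]] (order 3 in PSL_2(Z)); they generate PSL_2(Z)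
   with presentation <U,S | U^3, S^2>. *)
Definition S_mx : 'M[int]_2 :=
  \matrix_(i < 2, j < 2)
    (if (i == 0 :> nat) && (j == 1 :> nat) then -1
     else if (i == 1 :> nat) && (j == 0 :> nat) then 1 else 0).
Definition U_mx : 'M[int]_2 :=
  \matrix_(i < 2, j < 2)
    (if (i == 0 :> nat) && (j == 0 :> nat) then 0
     else if (i == 0 :> nat) && (j == 1 :> nat) then -1 else 1).

Definition letter_mx (l : bool) : 'M[int]_2 := if l then U_mx else S_mx.

Definition word_mx (w : seq bool) : 'M[int]_2 :=
  foldr (fun l M => letter_mx l *m M) 1%:M w.

Definition is_trivial (w : seq bool) : bool :=
  (word_mx w == 1%:M) || (word_mx w == - 1%:M).

Definition nbU (w : seq bool) : nat := count (fun l => l == letterU) w.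
Definition nbS (w : seq bool) : nat := count (fun l => l == letterS) w.

Definition noSS (w : seq bool) : bool := ~~ infix [:: letterS; letterS] w.

Definition q (n m : nat) : nat :=
  #|[set t : (n + m)%N.-tuple bool |
      [&& nbU t == n, nbS t == m & is_trivial t]]|.

Definition qhat (n m : nat) : nat :=
  #|[set t : (n + m)%N.-tuple bool |
      [&& nbU t == n, nbS t == m, is_trivial t & noSS t]]|.

(* univariate series in y: coefficient functions nat -> int *)
Definition smul (a b : nat -> int) : nat -> int :=
  fun k => \sum_(i < k.+1) a i * b (k - i)%N.
Definition sone : nat -> int := fun k => if k == 0%N then 1 else 0.
Definition spow (a : nat -> int) (n : nat) : nat -> int := iter n (smul a) sone.
Definition one_minus_y2 : nat -> int :=
  fun k => if k == 0%N then 1 else if k == 2%N then -1 else 0.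

(* bivariate series in x, y: F a b = coefficient of x^a y^b *)
Definition Qser : nat -> nat -> int := fun a b => (q a b)%:Z.
Definition Qhatser : nat -> nat -> int :=
  fun a b => if (3 %| a)%N && (2 %| b)%N then (qhat a b)%:Z else 0.

(* F(x * J(y), y) * J(y) for a bivariate series F and univariate J:
   the coefficient of x^a is (sum_m F a m y^m) * J^a * J. *)
Definition subst_mul (F : nat -> nat -> int) (J : nat -> int) :
  nat -> nat -> int :=
  fun a b => smul (smul (F a) (spow J a)) J b.

From mathcomp Require Import all_boot all_order all_algebra.
From mathcomp Require Import zify.
From Stdlib Require Import FunctionalExtensionality.
Set Implicit Arguments.
Unset Strict Implicit.
Unset Printing Implicit Defensive.
Import GRing.Theory.
Local Open Scope ring_scope.

(* Count words by their first letter, remembering in a predicate P on SL_2(Z)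
   what the rest of the word must evaluate to.  Since S^2 = -I and P is
   invariant under sign change, a leading S can be paired with a following S
   and dropped; in generating-function terms every maximal run of S's, one per
   gap between (and around) the u letters U, contributes a factor 1/(1 - y^2).
   Hence  sum_m q(u,m) y^m = (sum_m qhat(u,m) y^m) / (1 - y^2)^(u+1),  and
   [1/(1 - y^2)^(u+1)] y^(2k) = C(u+k, k).  Finally qhat(u,m) vanishes unless
   3 | u and 2 | m, which is checked on SL_2(Z/6Z), through which the
   abelianisation of PSL_2(Z) factors. *)

Definition sadd (a b : nat -> int) : nat -> int := fun k => a k + b k.
Definition shift (a : nat -> int) : nat -> int := fun k => if k is k'.+1 then a k' else 0.

(* Coefficient k of a product only involves coefficients up to k, so [smul]
   is computed by polynomial products of truncations; the ring laws of
   {poly int} then give commutativity and associativity. *)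
Definition trunc_poly (N : nat) (a : nat -> int) : {poly int} := \poly_(i < N) a i.

Lemma smul_coefM N a b k : (k < N)%N ->
  smul a b k = (trunc_poly N a * trunc_poly N b)`_k.
Proof.
move=> ltkN; rewrite coefM; apply: eq_bigr => i _.
have ltiN : (i < N)%N by rewrite (leq_ltn_trans _ ltkN) // -ltnS.
by rewrite !coef_poly ltiN (leq_ltn_trans (leq_subr i k) ltkN).
Qed.

Lemma eq_coefM_low (p p' q : {poly int}) k :
  (forall i, (i <= k)%N -> p`_i = p'`_i) -> (p * q)`_k = (p' * q)`_k.
Proof. by move=> ep; rewrite !coefM; apply: eq_bigr => i _; rewrite ep // -ltnS. Qed.

Lemma trunc_smul N a b i : (i < N)%N ->
  (trunc_poly N (smul a b))`_i = (trunc_poly N a * trunc_poly N b)`_i.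
Proof. by move=> ltiN; rewrite coef_poly ltiN (smul_coefM a b ltiN). Qed.

Lemma smulC a b : smul a b = smul b a.
Proof.
by apply: functional_extensionality => k; rewrite !(smul_coefM _ _ (ltnSn k)) mulrC.
Qed.

Lemma smulA a b c : smul (smul a b) c = smul a (smul b c).
Proof.
apply: functional_extensionality => k; rewrite !(smul_coefM _ _ (ltnSn k)).
have low i : (i <= k)%N -> (i < k.+1)%N by [].
rewrite (eq_coefM_low _ (fun i lik => trunc_smul a b (low i lik))) -mulrA.
by rewrite [in RHS]mulrC (eq_coefM_low _ (fun i lik => trunc_smul b c (low i lik))) mulrC.
Qed.

Lemma smul1r a : smul a sone = a.
Proof.
apply: functional_extensionality => k; rewrite /smul big_ord_recr /= subnn mulr1.
by rewrite big1 ?add0r // => i _; rewrite /sone subn_eq0 leqNgt ltn_ord mulr0.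
Qed.

Lemma smul_sadd a b c : smul (sadd a b) c = sadd (smul a c) (smul b c).
Proof.
apply: functional_extensionality => k; rewrite /smul /sadd -big_split /=.
by apply: eq_bigr => i _; rewrite mulrDl.
Qed.

Lemma smul_shift a b : smul (shift a) b = shift (smul a b).
Proof.
apply: functional_extensionality => -[|k]; rewrite /smul /shift.
  by rewrite big_ord1 mul0r.
by rewrite big_ord_recl mul0r add0r; apply: eq_bigr => i _; rewrite subSS.
Qed.

Lemma spowSr a u : spow a u.+1 = smul (spow a u) a.
Proof. exact: smulC. Qed.

Lemma smul_one_minus_y2E a k :
  smul a one_minus_y2 k = a k - (if k is k'.+2 then a k' else 0).
Proof.
have ltk : (k < k.+3)%N by lia.
rewrite (smul_coefM _ _ ltk).
have -> : trunc_poly k.+3 one_minus_y2 = 1 - 'X^2.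
  apply/polyP => i; rewrite coef_poly coefB coef1 coefXn /one_minus_y2.
  by case: i => [|[|[|i]]]; rewrite //= ?if_same // !ltnS.
rewrite mulrBr mulr1 coefB coefMXn coef_poly ltk.
case: k ltk => [|[|k]] ltk; rewrite ?subr0 // coef_poly !subSS subn0.
by rewrite (_ : (k < k.+1.+4)%N) //; lia.
Qed.

Lemma one_minus_y2_system a c b b' :
  a = sadd b (shift c) -> c = sadd b' (shift a) ->
  smul a one_minus_y2 = sadd b (shift b').
Proof.
move=> def_a def_c; apply: functional_extensionality => k.
rewrite smul_one_minus_y2E /sadd /shift {1}def_a /sadd /shift.
case: k => [|[|k]]; rewrite ?subr0 ?addr0 // def_c /sadd /shift ?addr0 //.
by rewrite addrA addrK.
Qed.

Definition inv_one_minus_y2 : nat -> int := fun k => if odd k then 0 else 1.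

Lemma inv_one_minus_y2K : smul inv_one_minus_y2 one_minus_y2 = sone.
Proof.
apply: functional_extensionality => k; rewrite smul_one_minus_y2E /inv_one_minus_y2.
by case: k => [|[|k]] //=; rewrite negbK subrr.
Qed.

Lemma inv_one_minus_y2_unique J : smul J one_minus_y2 = sone -> J = inv_one_minus_y2.
Proof.
move=> invJ; rewrite -[J]smul1r -inv_one_minus_y2K [smul inv_one_minus_y2 _]smulC.
by rewrite -smulA invJ smulC smul1r.
Qed.

Lemma div_one_minus_y2 a c : smul a one_minus_y2 = c -> a = smul c inv_one_minus_y2.
Proof.
by move<-; rewrite smulA [smul one_minus_y2 _]smulC inv_one_minus_y2K smul1r.
Qed.

Lemma smul_inv_one_minus_y2E c k : smul c inv_one_minus_y2 k =
  c k + (if k is k'.+2 then smul c inv_one_minus_y2 k' else 0).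
Proof.
have := smul_one_minus_y2E (smul c inv_one_minus_y2) k.
by rewrite smulA inv_one_minus_y2K smul1r => ->; rewrite subrK.
Qed.

Lemma spow_inv_one_minus_y2 u k :
  spow inv_one_minus_y2 u.+1 (2 * k)%N = 'C(u + k, k)%N /\
  spow inv_one_minus_y2 u.+1 (2 * k)%N.+1 = 0.
Proof.
elim: u k => [|u IHu] k.
  by rewrite spowSr smulC smul1r /inv_one_minus_y2 /= mul2n odd_double add0n binn.
rewrite spowSr; elim: k => [|k [IHk_even IHk_odd]].
  rewrite !muln0 !smul_inv_one_minus_y2E.
  by have [-> ->] := IHu 0%N; rewrite !bin0 addr0.
have [IHu_even IHu_odd] := IHu k.+1; rewrite mulnS add2n in IHu_even IHu_odd *.
set e := spow _ u.+1 in IHk_even IHk_odd IHu_even IHu_odd *.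
rewrite !(smul_inv_one_minus_y2E _ (2 * k).+2, smul_inv_one_minus_y2E _ (2 * k).+3) /=.
rewrite IHu_even IHu_odd IHk_even IHk_odd add0r; split=> //.
by rewrite !addSn binS PoszD addnS.
Qed.

Lemma sum_even_terms (R : nmodType) (f : nat -> R) m :
  (forall k, f (2 * k)%N.+1 = 0) ->
  \sum_(i < (2 * m)%N.+1) f i = \sum_(k < m.+1) f (2 * k)%N.
Proof.
move=> f_odd; elim: m => [|m IHm]; first by rewrite !big_ord1.
rewrite mulnS add2n big_ord_recr /= big_ord_recr /= IHm f_odd addr0 [RHS]big_ord_recr /=.
by rewrite mulnS add2n.
Qed.

Fixpoint words (N : nat) : seq (seq bool) :=
  if N is N'.+1 then [seq true :: w | w <- words N'] ++ [seq false :: w | w <- words N']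
  else [:: [::]].

Lemma mem_words N w : (w \in words N) = (size w == N).
Proof.
elim: N w => [|N IHN] [|l w] //=; rewrite mem_cat.
  by apply/norP; split; apply/negP => /mapP [].
rewrite eqSS -IHN; apply/orP/idP => [[] /mapP [v Nv [_ ->]] //|Nw].
by case: l; [left | right]; apply: map_f.
Qed.

Lemma uniq_words N : uniq (words N).
Proof.
elim: N => //= N IHN; rewrite cat_uniq !map_inj_uniq ?IHN //=; last 2 first.
- by move=> ? ? [].
- by move=> ? ? [].
by rewrite andbT; apply/hasPn => _ /mapP [w _ ->]; apply/mapP => -[].
Qed.

Lemma card_words N (p : pred (seq bool)) :
  #|[set t : N.-tuple bool | p t]| = count p (words N).
Proof.
rewrite cardE -(size_map val) -size_filter; apply: perm_size.
apply: uniq_perm; rewrite ?filter_uniq ?uniq_words ?(map_inj_uniq val_inj) ?enum_uniq //.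
move=> w; rewrite mem_filter mem_words; apply/mapP/andP => [[t] | [pw /eqP Nw]].
  by rewrite mem_enum inE => pt ->; rewrite size_tuple.
by exists (Tuple (introT eqP Nw)); rewrite // mem_enum inE.
Qed.

Lemma mulmx2E (A B : 'M[int]_2) i j : (A *m B) i j = A i 0 * B 0 j + A i 1 * B 1 j.
Proof.
rewrite mxE !big_ord_recl big_ord0 addr0.
by have -> : lift ord0 ord0 = 1 :> 'I_2 by exact: val_inj.
Qed.

(* The state of a word is its value reduced mod 6 together with #U mod 3 and
   #S mod 2; [step6] is the effect on states of prefixing U or S. *)
Definition state6 := (int * int * int * int * nat * nat)%type.

Definition step6 (x : state6) (l : bool) : state6 :=
  let: (a, b, c, d, i, j) := x in
  if l then (modz (- c) 6, modz (- d) 6, modz (a + c) 6, modz (b + d) 6, (i.+1 %% 3)%N, j)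
  else (modz (- c) 6, modz (- d) 6, a, b, i, (j.+1 %% 2)%N).

(* 13 rounds reach the fixed point: the 144 elements of SL_2(Z/6Z). *)
Definition reachable6 : seq state6 :=
  iter 13 (fun R => undup (R ++ [seq step6 x l | x <- R, l <- [:: true; false]]))
    [:: (1, 0, 0, 1, 0%N, 0%N)].

Lemma reachable6_closed :
  all (fun x => (step6 x true \in reachable6) && (step6 x false \in reachable6)) reachable6.
Proof. by vm_compute. Qed.

Lemma reachable6_identity : all (fun x : state6 => let: (a, b, c, d, i, j) := x in
  ((a, b, c, d) \in [:: (1, 0, 0, 1); (5, 0, 0, 5)]) ==> (i == 0%N) && (j == 0%N))
  reachable6.
Proof. by vm_compute. Qed.

Definition word_state6 (w : seq bool) : state6 :=
  let M := word_mx w in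
  (modz (M 0 0) 6, modz (M 0 1) 6, modz (M 1 0) 6, modz (M 1 1) 6,
   (nbU w %% 3)%N, (nbS w %% 2)%N).

Lemma word_state6_cons l w : word_state6 (l :: w) = step6 (word_state6 w) l.
Proof.
have modnSm n d : ((n %% d).+1 %% d = n.+1 %% d)%N.
  by rewrite -[n.+1]addn1 -modnDml addn1.
rewrite /word_state6 /step6 /=.
by case: l; rewrite /letter_mx !mulmx2E !mxE /= ?mul0r ?mul1r ?add0r ?addr0 ?mulN1r
  !modzNm ?modzDm !add0n !add1n modnSm.
Qed.

Lemma word_state6_reachable w : word_state6 w \in reachable6.
Proof.
elim: w => [|l w IHw]; first by rewrite /word_state6 /= !mxE; vm_compute.
have /allP /(_ _ IHw) /andP [stepU stepS] := reachable6_closed.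
by rewrite word_state6_cons; case: l.
Qed.

Lemma trivial_word_counts w : is_trivial w -> (3 %| nbU w)%N && (2 %| nbS w)%N.
Proof.
move=> trivial_w; have /allP /(_ _ (word_state6_reachable w)) := reachable6_identity.
rewrite /word_state6 /dvdn.
by case/orP: trivial_w => /eqP ->; rewrite !mxE /= => /andP [/eqP -> /eqP ->].
Qed.

Lemma qhat_eq0 u s : ~~ ((3 %| u) && (2 %| s))%N -> qhat u s = 0%N.
Proof.
move=> not_dvd; apply/eqP; rewrite cards_eq0; apply/eqP/setP => t; rewrite !inE.
apply/negP => /and4P [/eqP nbU_t /eqP nbS_t /trivial_word_counts counts _].
by move: counts; rewrite nbU_t nbS_t (negbTE not_dvd).
Qed.

Definition premul (A : 'M[int]_2) (P : pred 'M[int]_2) : pred 'M[int]_2 :=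
  fun M => P (A *m M).

Definition count_words (R : pred (seq bool)) (P : pred 'M[int]_2) u s : nat :=
  count (fun w => [&& nbU w == u, nbS w == s, R w & P (word_mx w)]) (words (u + s)%N).

Lemma eq_count_words R R' P P' u s :
  R =1 R' -> P =1 P' -> count_words R P u s = count_words R' P' u s.
Proof. by move=> eqR eqP; apply: eq_count => w; rewrite eqR eqP. Qed.

Lemma count_words_pred0 R P u s : R =1 xpred0 -> count_words R P u s = 0%N.
Proof.
move=> R0; rewrite /count_words (@eq_count _ _ xpred0) ?count_pred0 // => w.
by rewrite R0 /= !andbF.
Qed.

Lemma count_words_rec R P u s : count_words R P u s =
  ((if u is u'.+1 then count_words (fun w => R (true :: w)) (premul U_mx P) u' s else 0)
   + (if s is s'.+1 then count_words (fun w => R (false :: w)) (premul S_mx P) u s' else 0)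
   + [&& u == 0%N, s == 0%N, R [::] & P 1%:M])%N.
Proof.
have count_first N p : count p (words N.+1) =
    (count (fun w => p (true :: w)) (words N) + count (fun w => p (false :: w)) (words N))%N.
  by rewrite /= count_cat !count_map.
have pred0_count N (p : pred (seq bool)) : p =1 pred0 -> count p (words N) = 0%N.
  by move/eq_count->; rewrite count_pred0.
rewrite /count_words; case: u => [|u]; case: s => [|s]; rewrite ?addn0 ?add0n //.
- by rewrite /= addn0.
- by rewrite count_first pred0_count.
- by rewrite count_first [X in (_ + X)%N]pred0_count ?addn0 // => w; rewrite /= andbF.
by rewrite addSn count_first addSnnS.
Qed.

(* [headU] is also true on the empty word. *)
Definition headU (w : seq bool) : bool := head letterU w.

Definition count_wordsU R := count_words (fun w => headU w && R w).

Lemma count_words_split R P u s : count_words R P u s = (count_wordsU R P u s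
  + if s is s'.+1 then count_words (fun w => R (false :: w)) (premul S_mx P) u s' else 0)%N.
Proof.
rewrite /count_wordsU [in RHS]count_words_rec [in LHS]count_words_rec.
case: s => [|s]; rewrite ?addn0 //.
by rewrite (@count_words_pred0 (fun w => false)) // addn0 addnAC.
Qed.

Lemma count_wordsU_succ R P u s :
  count_wordsU R P u.+1 s = count_words (fun w => R (true :: w)) (premul U_mx P) u s.
Proof.
rewrite /count_wordsU count_words_rec addn0.
by case: s => [|s]; rewrite ?addn0 // (@count_words_pred0 (fun w => false)) ?addn0.
Qed.

Lemma count_wordsU0 R P s : count_wordsU R P 0 s = [&& s == 0%N, R [::] & P 1%:M] :> nat.
Proof.
rewrite /count_wordsU count_words_rec.
by case: s => [|s]; rewrite ?add0n // (@count_words_pred0 (fun w => false)).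
Qed.

Lemma noSS_consU w : noSS (true :: w) = noSS w.
Proof. by rewrite /noSS infix_consl. Qed.

Lemma noSS_consS w : noSS (false :: w) = noSS w && headU w.
Proof.
by rewrite /noSS infix_consl; case: w => [|[] w]; rewrite /= ?andbT ?andbF ?prefix0s.
Qed.

Lemma mulmxSS : S_mx *m S_mx = - 1%:M.
Proof.
apply/matrixP => i j; rewrite mulmx2E !mxE.
by case: i => [[|[|i]] ?]; case: j => [[|[|j]] ?].
Qed.

Definition sign_invariant (P : pred 'M[int]_2) := forall M, P (- M) = P M.

Lemma premul_sign_invariant A P : sign_invariant P -> sign_invariant (premul A P).
Proof. by move=> invP M; rewrite /premul mulmxN invP. Qed.

Lemma premulSS P : sign_invariant P -> premul S_mx (premul S_mx P) =1 P.
Proof. by move=> invP M; rewrite /premul mulmxA mulmxSS mulNmx mul1mx invP. Qed.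

Definition series (f : nat -> nat) : nat -> int := fun s => (f s)%:Z.

Definition nwords P := count_words xpredT P.
Definition nreduced P := count_words noSS P.

Lemma series_split R P u : series (count_words R P u) =
  sadd (series (count_wordsU R P u))
       (shift (series (count_words (fun w => R (false :: w)) (premul S_mx P) u))).
Proof.
apply: functional_extensionality => s; rewrite /series /sadd /shift count_words_split.
by case: s => [|s]; rewrite ?addn0 ?addr0 // PoszD.
Qed.

(* Splitting off a leading S twice returns to P (as S^2 = -I), which closes
   the system solved by [one_minus_y2_system]. *)
Lemma nwords_series P u : sign_invariant P ->
  series (nwords P u) =
  smul (sadd (series (count_wordsU xpredT P u))
             (shift (series (count_wordsU xpredT (premul S_mx P) u)))) inv_one_minus_y2.
Proof.
move=> invP; apply/div_one_minus_y2/(one_minus_y2_system (series_split _ _ _)).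
rewrite [LHS]series_split; congr (sadd _ (shift (series _))).
apply: functional_extensionality => s; exact: eq_count_words (premulSS invP).
Qed.

Lemma nreduced_series P u : series (nreduced P u) =
  sadd (series (count_wordsU noSS P u)) (shift (series (count_wordsU noSS (premul S_mx P) u))).
Proof.
rewrite [LHS]series_split; congr (sadd _ (shift (series _))).
apply: functional_extensionality => s; apply: eq_count_words => // w.
by rewrite noSS_consS andbC.
Qed.

Lemma nwords_series_from_wordsU u P : sign_invariant P ->
  (forall Q, sign_invariant Q -> series (count_wordsU xpredT Q u) =
     smul (series (count_wordsU noSS Q u)) (spow inv_one_minus_y2 u)) ->
  series (nwords P u) =
  smul (smul (series (nreduced P u)) (spow inv_one_minus_y2 u)) inv_one_minus_y2.
Proof.
move=> invP wordsU_series; rewrite nwords_series // !wordsU_series //.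
  by rewrite -smul_shift -smul_sadd -nreduced_series.
exact: premul_sign_invariant.
Qed.

Lemma count_wordsU_series u P : sign_invariant P ->
  series (count_wordsU xpredT P u) =
  smul (series (count_wordsU noSS P u)) (spow inv_one_minus_y2 u).
Proof.
elim: u P => [|u IHu] P invP.
  by rewrite smul1r; apply: functional_extensionality => s; rewrite /series !count_wordsU0.
have -> : series (count_wordsU xpredT P u.+1) = series (nwords (premul U_mx P) u).
  by apply: functional_extensionality => s; rewrite /series count_wordsU_succ.
have -> : count_wordsU noSS P u.+1 = nreduced (premul U_mx P) u.
  apply: functional_extensionality => s; rewrite count_wordsU_succ.
  by apply: eq_count_words => // w; rewrite noSS_consU.
by rewrite (nwords_series_from_wordsU (premul_sign_invariant _ invP) IHu) smulA -spowSr.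
Qed.

Definition trivial_mx : pred 'M[int]_2 := fun M => (M == 1%:M) || (M == - 1%:M).

Lemma trivial_mx_sign_invariant : sign_invariant trivial_mx.
Proof. by move=> M; rewrite /trivial_mx eqr_oppLR eqr_opp orbC. Qed.

Lemma q_nwords u : q u = nwords trivial_mx u.
Proof.
apply: functional_extensionality => s.
by rewrite /q (card_words _ (fun w => [&& nbU w == u, nbS w == s & is_trivial w])).
Qed.

Lemma qhat_nreduced u : qhat u = nreduced trivial_mx u.
Proof.
apply: functional_extensionality => s.
rewrite /qhat (card_words _ (fun w => [&& nbU w == u, nbS w == s, is_trivial w & noSS w])).
by apply: eq_count => w; rewrite /= [noSS w && _]andbC.
Qed.

Lemma series_q u : series (q u) =
  smul (smul (series (qhat u)) (spow inv_one_minus_y2 u)) inv_one_minus_y2.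
Proof.
rewrite q_nwords qhat_nreduced.
apply: nwords_series_from_wordsU trivial_mx_sign_invariant _ => Q.
exact: count_wordsU_series.
Qed.

Lemma q_binomial u m :
  q u (2 * m) = (\sum_(k < m.+1) qhat u (2 * m - 2 * k) * 'C(u + k, k))%N.
Proof.
have coef_q := congr1 (fun f => f (2 * m)%N) (series_q u).
rewrite /= smulA -spowSr smulC /series /smul (@sum_even_terms _
  (fun i => spow inv_one_minus_y2 u.+1 i * (qhat u (2 * m - i)%N)%:Z)) in coef_q; last first.
  by move=> k; have [_ ->] := spow_inv_one_minus_y2 u k; rewrite mul0r.
apply/eqP; rewrite -eqz_nat coef_q -natz natr_sum; apply/eqP/eq_bigr => k _.
by have [-> _] := spow_inv_one_minus_y2 u k; rewrite natrM !natz mulrC.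
Qed.

Lemma Qser_subst : Qser = subst_mul Qhatser inv_one_minus_y2.
Proof.
apply: functional_extensionality => a; rewrite /subst_mul.
have -> : Qhatser a = series (qhat a).
  apply: functional_extensionality => b; rewrite /Qhatser /series.
  by case: ifPn => // not_dvd; rewrite qhat_eq0.
exact: series_q.
Qed.

Theorem proposition2 :
  (forall n m : nat,
      q (3 * n) (2 * m) =
      (\sum_(k < m.+1) qhat (3 * n) (2 * m - 2 * k) * 'C(3 * n + k, k))%N)
  /\
  (forall J : nat -> int, smul J one_minus_y2 = sone ->
      Qser = subst_mul Qhatser J).
Proof.
split=> [n m | J /inv_one_minus_y2_unique ->]; first exact: q_binomial.
exact: Qser_subst.
Qed.
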